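(* Let $A\subseteq\omega$ be an AP-set and let $f:\omega\to\omega$ be any function. Then there exists an AP-set $C\subseteq A$ such that either (1) $|f[C]|=1$, or (2) $f$ is finite-to-one on $C$, and if $\langle x_n\rangle_{n=0}^\infty$ enumerates $f[C]$ in increasing order, then $\lim_{n\to\infty}(x_{n+1}-x_n)=\infty$. In particular, in either case $f[C]$ is not an IP-set.
   Context: $\omega=\{0,1,2,\dots\}$. A set $A\subseteq\omega$ is an AP-set if it contains arithmetic progressions of every finite length. For $B\subseteq\omega$, $FS(B)$ denotes the set of all sums $\sum_{n\in F}n$ over nonempty finite subsets $F\subseteq B$. A set $A\subseteq\omega$ is an IP-set if there is an infinite $B\subseteq\omega$ with $FS(B)\subseteq A$. *)

From Stdlib Require Import Arith List.
Import ListNotations.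

Definition natset := nat -> Prop.

Definition AP_set (A : natset) : Prop :=
  forall k : nat, exists a d : nat, 0 < d /\ forall i : nat, i < k -> A (a + i * d).

Definition FS (B : natset) : natset :=
  fun z => exists F : list nat, F <> [] /\ NoDup F /\
             (forall n, In n F -> B n) /\ z = list_sum F.

Definition infinite_set (B : natset) : Prop :=
  forall N : nat, exists n, N <= n /\ B n.

Definition IP_set (A : natset) : Prop :=
  exists B : natset, infinite_set B /\ forall z, FS B z -> A z.

Definition finite_set (P : natset) : Prop :=
  exists s : list nat, forall x, P x -> In x s.

Definition image (f : nat -> nat) (C : natset) : natset :=
  fun y => exists x, C x /\ f x = y.

Definition subset (C A : natset) : Prop := forall x, C x -> A x.

Definition finite_to_one_on (f : nat -> nat) (C : natset) : Prop :=
  forall y, finite_set (fun x => C x /\ f x = y).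

Definition increasing_enum (x : nat -> nat) (P : natset) : Prop :=
  (forall n, x n < x (S n)) /\ (forall y, P y <-> exists n, x n = y).

From Stdlib Require Import Arith List Lia Wf_nat Classical ClassicalEpsilon.
Import ListNotations.

(* If A ∩ f⁻¹[0, B) is still an AP-set for some B, then van der Waerden's
   theorem (in A, with f as colouring) and a pigeonhole over the B values give a
   value y with A ∩ f⁻¹(y) an AP-set.  Otherwise, for every bound B, colouring
   by "f < B" or by f mod m produces progressions in A of any length on which
   f ≥ B and f is constant mod m.  Gluing, for j = 0, 1, ..., a stage of length
   j with modulus j + 1 above all earlier values of f gives C: distinct values
   of f on C lying beyond the stage-j bound differ by more than j.  Such a
   sparse set is not an IP-set, which would contain b, b' and b + b' with b'
   arbitrarily large.  Van der Waerden's theorem itself is proved by colour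
   focusing. *)

(** * Van der Waerden's theorem *)

(* [d <= N] bounds the step also when [k <= 1]. *)
Definition mono_ap (c : nat -> nat) (k N : nat) : Prop :=
  exists a d, 0 < d /\ d <= N /\
    forall j, j < k -> a + j * d < N /\ c (a + j * d) = c a.

Definition vdw_bound (k r W : nat) : Prop :=
  forall c : nat -> nat, (forall x, c x < r) -> mono_ap c k W.

Lemma mono_ap_shift c m n N k :
  m + n <= N -> mono_ap (fun x => c (m + x)) k n -> mono_ap c k N.
Proof.
  intros HN [a [d [Hd [Hdn H]]]].
  exists (m + a), d. split; [lia|]. split; [lia|].
  intros j Hj. destruct (H j Hj) as [Hlt Hc].
  rewrite <- Nat.add_assoc. split; [lia|exact Hc].
Qed.

(* [s] monochromatic progressions [f - k dd i, ..., f - dd i] of pairwise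
   distinct colours, all pointing at the same next term [f]. *)
Definition focus (c : nat -> nat) (k f : nat) (dd : nat -> nat) (s : nat) : Prop :=
  (forall i, i < s -> 0 < dd i /\ k * dd i <= f /\
     forall j, 1 <= j <= k -> c (f - j * dd i) = c (f - dd i)) /\
  (forall i i', i < s -> i' < s -> i <> i' -> c (f - dd i) <> c (f - dd i')).

Lemma mono_ap_of_focus c k N f dd s i :
  1 <= k -> f < N -> focus c k f dd s -> i < s -> c f = c (f - dd i) ->
  mono_ap c (S k) N.
Proof.
  intros Hk Hf [Hdd _] Hi Hcf. destruct (Hdd i Hi) as [Hd [Hkd Hc]].
  set (d := dd i) in *.
  exists (f - k * d), d. split; [lia|]. split; [nia|].
  intros j Hj.
  assert (Hjd : j * d <= k * d) by (apply Nat.mul_le_mono_r; lia).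
  split; [lia|].
  rewrite (Hc k) by lia.
  destruct (Nat.eq_dec j k) as [->|Hne].
  - replace (f - k * d + k * d) with f by lia. exact Hcf.
  - replace (f - k * d + j * d) with (f - (k - j) * d)
      by (rewrite Nat.mul_sub_distr_r; lia).
    apply Hc. lia.
Qed.

Fixpoint code (r : nat) (g : nat -> nat) (n : nat) : nat :=
  match n with 0 => 0 | S n' => r * code r g n' + g n' end.

Lemma code_lt r g n : (forall x, g x < r) -> code r g n < r ^ n.
Proof. intros Hg. induction n as [|n IH]; simpl; [lia|]. specialize (Hg n). nia. Qed.

Lemma code_inj r g h n : (forall x, g x < r) -> (forall x, h x < r) ->
  code r g n = code r h n -> forall x, x < n -> g x = h x.
Proof.
  intros Hg Hh. induction n as [|n IH]; simpl; intros E x Hx; [lia|].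
  destruct (Nat.div_mod_unique r _ _ _ _ (Hg n) (Hh n) E) as [Eq Er].
  destruct (Nat.eq_dec x n) as [->|Hne]; [exact Er|].
  apply IH; [exact Eq|lia].
Qed.

Lemma sub_blocks n b k e f j t : j <= k -> t <= f ->
  n * (b + k * e) + f - (t + j * (n * e)) = n * (b + (k - j) * e) + (f - t).
Proof.
  intros Hj Ht. destruct (Nat.le_exists_sub j k Hj) as [q [-> _]].
  replace (q + j - j) with q by lia.
  replace (n * (b + (q + j) * e)) with (n * (b + q * e) + j * (n * e)) by ring.
  lia.
Qed.

(* The blocks [b, b + e, ..., b + (k-1) e] of length [n] are coloured alike, so
   each old progression lifts to one of step [dd i + n e], and the block
   progression itself gives one of step [n e]; all of them point at position [f]
   of block [b + k e]. *)
Lemma focus_extend c k n b e f dd s :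
  1 <= k -> 0 < e -> f < n ->
  (forall j x, j < k -> x < n -> c (n * (b + j * e) + x) = c (n * b + x)) ->
  focus (fun x => c (n * b + x)) k f dd s ->
  (forall i, i < s -> c (n * b + f) <> c (n * b + (f - dd i))) ->
  focus c k (n * (b + k * e) + f)
    (fun i => if lt_dec i s then dd i + n * e else n * e) (S s).
Proof.
  intros Hk He Hf Hpat [Hdd Hdist] Hnew.
  set (F := n * (b + k * e) + f).
  assert (Hold : forall i j, i < s -> 1 <= j <= k ->
            c (F - j * (dd i + n * e)) = c (n * b + (f - dd i))).
  { intros i j Hi Hj. destruct (Hdd i Hi) as [_ [Hkd Hc]].
    assert (j * dd i <= k * dd i) by (apply Nat.mul_le_mono_r; lia).
    unfold F. rewrite (Nat.mul_add_distr_l j), sub_blocks, Hpat by lia.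
    exact (Hc j Hj). }
  assert (Hcentre : forall j, 1 <= j <= k -> c (F - j * (n * e)) = c (n * b + f)).
  { intros j Hj. unfold F.
    rewrite <- (Nat.add_0_l (j * (n * e))), sub_blocks, Nat.sub_0_r by lia.
    apply Hpat; lia. }
  assert (Hold1 : forall i, i < s -> c (F - (dd i + n * e)) = c (n * b + (f - dd i))).
  { intros i Hi. rewrite <- (Nat.mul_1_l (dd i + n * e)). apply Hold; lia. }
  assert (Hcentre1 : c (F - n * e) = c (n * b + f)).
  { rewrite <- (Nat.mul_1_l (n * e)). apply Hcentre; lia. }
  split.
  - intros i Hi. cbv beta. destruct (lt_dec i s) as [His|His].
    + destruct (Hdd i His) as [Hd [Hkd _]].
      split; [lia|]. split; [unfold F; nia|].
      intros j Hj. rewrite Hold, Hold1 by lia. reflexivity.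
    + split; [nia|]. split; [unfold F; nia|].
      intros j Hj. rewrite Hcentre, Hcentre1 by lia. reflexivity.
  - intros i i' Hi Hi' Hne. cbv beta.
    destruct (lt_dec i s) as [Ha|Ha]; destruct (lt_dec i' s) as [Ha'|Ha'].
    + rewrite !Hold1 by lia. apply Hdist; assumption.
    + rewrite Hold1, Hcentre1 by lia. intros E. apply (Hnew i Ha). congruence.
    + rewrite Hold1, Hcentre1 by lia. intros E. apply (Hnew i' Ha'). congruence.
    + lia.
Qed.

Lemma focusing k r : 1 <= k -> (forall r', exists W, vdw_bound k r' W) ->
  forall s, exists N, forall c, (forall x, c x < r) ->
    mono_ap c (S k) N \/ exists f dd, f < N /\ focus c k f dd s.
Proof.
  intros Hk Hvdw. induction s as [|s [n Hn]].
  - exists 1. intros c _. right. exists 0, (fun _ => 0).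
    split; [lia|]. split; intros; lia.
  - destruct (Hvdw (r ^ n)) as [M HM].
    exists (n * (2 * M)). intros c Hc.
    (* an [r ^ n]-colouring of blocks of length [n] by their colour patterns *)
    set (block := fun b => code r (fun x => c (n * b + x)) n).
    destruct (HM block (fun b => code_lt r _ n (fun x => Hc _)))
      as [b [e [He [HeM Hb]]]].
    assert (Hpat : forall j x, j < k -> x < n -> c (n * (b + j * e) + x) = c (n * b + x)).
    { intros j x Hj Hx. destruct (Hb j Hj) as [_ E].
      exact (code_inj r _ _ n (fun _ => Hc _) (fun _ => Hc _) E x Hx). }
    assert (Hlast : b + (k - 1) * e < M) by (apply Hb; lia).
    assert (Hke : k * e = (k - 1) * e + e) by (rewrite Nat.mul_sub_distr_r; nia).
    destruct (Hn (fun x => c (n * b + x)) (fun _ => Hc _)) as [Hm|[f [dd [Hf Hfoc]]]].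
    + left. apply (mono_ap_shift c (n * b) n); [nia|exact Hm].
    + destruct (classic (exists i, i < s /\ c (n * b + f) = c (n * b + (f - dd i))))
        as [[i [Hi Hci]]|Hnew].
      * left. apply (mono_ap_shift c (n * b) n); [nia|].
        exact (mono_ap_of_focus _ k n f dd s i Hk Hf Hfoc Hi Hci).
      * right. eexists _, _. split; [|apply focus_extend; eauto].
        nia.
Qed.

Lemma pigeonhole_onto r (g : nat -> nat) y :
  (forall i i', i < r -> i' < r -> i <> i' -> g i <> g i') ->
  (forall i, i < r -> g i < r) -> y < r -> exists i, i < r /\ g i = y.
Proof.
  intros Hinj Hb Hy.
  assert (Hnodup : NoDup (map g (seq 0 r))).
  { apply NoDup_map_NoDup_ForallPairs; [|apply seq_NoDup].
    intros a a' Ha Ha'. apply in_seq in Ha, Ha'.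
    intros E. destruct (Nat.eq_dec a a'); [assumption|].
    exfalso. apply (Hinj a a'); auto; lia. }
  assert (Honto : incl (seq 0 r) (map g (seq 0 r))).
  { apply NoDup_length_incl; [exact Hnodup| rewrite length_map; lia|].
    intros z Hz. apply in_map_iff in Hz. destruct Hz as [i [<- Hi]].
    apply in_seq in Hi. apply in_seq. pose proof (Hb i ltac:(lia)). lia. }
  assert (Hy' : In y (seq 0 r)) by (apply in_seq; lia).
  apply Honto, in_map_iff in Hy'. destruct Hy' as [i [E Hi]].
  apply in_seq in Hi. exists i. split; [lia|exact E].
Qed.

Theorem van_der_waerden k r : exists W, vdw_bound (S k) r W.
Proof.
  revert r. induction k as [|k IH]; intros r.
  - exists 1. intros c _. exists 0, 1. split; [lia|]. split; [lia|].
    intros j Hj. replace j with 0 by lia. split; [lia|reflexivity].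
  - destruct (focusing (S k) r ltac:(lia) IH r) as [N HN].
    exists N. intros c Hc.
    destruct (HN c Hc) as [Hm|[f [dd [Hf Hfoc]]]]; [exact Hm|].
    destruct (pigeonhole_onto r (fun i => c (f - dd i)) (c f)
                (proj2 Hfoc) (fun i _ => Hc _) (Hc f)) as [i [Hi E]].
    exact (mono_ap_of_focus c (S k) N f dd r i ltac:(lia) Hf Hfoc Hi (eq_sym E)).
Qed.

Lemma AP_set_monochromatic (A : natset) (col : nat -> nat) r k :
  AP_set A -> (forall x, col x < r) ->
  exists a d, 0 < d /\ forall j, j < k -> A (a + j * d) /\ col (a + j * d) = col a.
Proof.
  intros hA Hcol. destruct (van_der_waerden k r) as [W HW].
  destruct (hA W) as [a0 [d0 [Hd0 HA]]].
  destruct (HW (fun i => col (a0 + i * d0)) (fun _ => Hcol _)) as [a1 [d1 [Hd1 [_ H]]]].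
  exists (a0 + a1 * d0), (d1 * d0). split; [nia|].
  intros j Hj. destruct (H j ltac:(lia)) as [Hlt Hc].
  replace (a0 + a1 * d0 + j * (d1 * d0)) with (a0 + (a1 + j * d1) * d0) by ring.
  split; [exact (HA _ Hlt)|exact Hc].
Qed.

(** * Sparse sets *)

Definition sparse (P : natset) : Prop :=
  forall J, exists T, forall u v, P u -> P v -> T <= u -> u < v -> J < v - u.

Lemma bounded_sparse (P : natset) M : (forall z, P z -> z <= M) -> sparse P.
Proof. intros HM J. exists (S M). intros u v Hu _ Hle _. specialize (HM u Hu). lia. Qed.

Lemma FS_singleton (B : natset) b : B b -> FS B b.
Proof.
  intros Hb. exists [b]. split; [discriminate|]. split; [repeat constructor; easy|].
  split; [intros n [->|[]]; exact Hb|simpl; lia].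
Qed.

Lemma FS_pair (B : natset) b b' : B b -> B b' -> b <> b' -> FS B (b + b').
Proof.
  intros Hb Hb' Hne. exists [b; b']. split; [discriminate|].
  split; [repeat constructor; simpl; intuition|].
  split; [intros n [->|[->|[]]]; assumption|simpl; lia].
Qed.

Lemma sparse_not_IP_set (P : natset) : sparse P -> ~ IP_set P.
Proof.
  intros Hsp [B [HB HFS]].
  destruct (HB 1) as [b [Hb HBb]].
  destruct (Hsp b) as [T HT].
  destruct (HB (T + b + 1)) as [b' [Hb' HBb']].
  assert (Hgap : b < b + b' - b').
  { apply HT; [apply HFS, FS_singleton | apply HFS, FS_pair | |]; auto; lia. }
  lia.
Qed.

Lemma increasing_enum_exists (P : natset) : infinite_set P -> exists x, increasing_enum x P.
Proof.
  intros Hinf.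
  assert (Hleast : forall t, exists y, (t <= y /\ P y) /\ forall z, t <= z /\ P z -> y <= z).
  { intros t. destruct (dec_inh_nat_subset_has_unique_least_element
                          (fun y => t <= y /\ P y) (fun y => classic _) (Hinf t))
      as [y [Hy _]].
    exists y. exact Hy. }
  destruct (choice _ Hleast) as [next Hnext].
  set (x := fix x n := match n with 0 => next 0 | S n => next (S (x n)) end).
  assert (Hx : forall n, P (x n)) by (intros [|n]; apply Hnext).
  assert (Hinc : forall n, x n < x (S n)) by (intros n; simpl; apply Hnext).
  assert (Hge : forall n, n <= x n) by (induction n; [lia|specialize (Hinc n); lia]).
  assert (Hcover : forall n y, P y -> y <= x n -> exists m, x m = y).
  { induction n as [|n IH]; intros y Hy Hle.
    - exists 0. pose proof (proj2 (Hnext 0) y ltac:(split; [lia|exact Hy])). simpl in *. lia.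
    - destruct (Nat.le_gt_cases y (x n)) as [Hl|Hl]; [exact (IH y Hy Hl)|].
      exists (S n). pose proof (proj2 (Hnext (S (x n))) y ltac:(split; [lia|exact Hy])).
      simpl in *. lia. }
  exists x. split; [exact Hinc|]. intros y. split.
  - intros Hy. exact (Hcover y y Hy (Hge y)).
  - intros [n <-]. apply Hx.
Qed.

Lemma increasing_enum_gaps (P : natset) x : increasing_enum x P -> sparse P ->
  forall M, exists N, forall n, N <= n -> M <= x (S n) - x n.
Proof.
  intros [Hinc Henum] Hsp M.
  assert (Hge : forall n, n <= x n) by (induction n; [lia|specialize (Hinc n); lia]).
  destruct (Hsp M) as [T HT]. exists T. intros n Hn.
  assert (HT' := HT (x n) (x (S n))). specialize (Hge n).
  enough (M < x (S n) - x n) by lia.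
  apply HT'; [apply Henum; eauto|apply Henum; eauto|lia|apply Hinc].
Qed.

Lemma mod_gap m u v : 0 < m -> u mod m = v mod m -> u < v -> m <= v - u.
Proof.
  intros Hm E Huv.
  pose proof (Nat.div_mod u m ltac:(lia)) as Hu.
  pose proof (Nat.div_mod v m ltac:(lia)) as Hv.
  rewrite E in Hu.
  assert (u / m < v / m) by nia.
  nia.
Qed.

(** * Bounded and unbounded colourings *)

Definition has_ap (P : natset) (k : nat) : Prop :=
  exists a d, 0 < d /\ forall i, i < k -> P (a + i * d).

Lemma has_ap_le (P : natset) k k' : k' <= k -> has_ap P k -> has_ap P k'.
Proof. intros Hk [a [d [Hd H]]]. exists a, d. split; [exact Hd|]. intros i Hi. apply H. lia. Qed.

Lemma AP_set_pigeonhole (P : nat -> natset) B :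
  (forall k, exists y, y < B /\ has_ap (P y) k) -> exists y, AP_set (P y).
Proof.
  induction B as [|B IH]; intros H.
  - destruct (H 0) as [y [Hy _]]. lia.
  - destruct (classic (AP_set (P B))) as [HB|HB]; [eauto|].
    apply not_all_ex_not in HB. destruct HB as [k0 Hk0].
    apply IH. intros k. destruct (H (Nat.max k k0)) as [y [Hy Hap]].
    exists y. split.
    + destruct (Nat.eq_dec y B) as [->|]; [|lia].
      exfalso. apply Hk0, (has_ap_le _ (Nat.max k k0)); [lia|exact Hap].
    + apply (has_ap_le _ (Nat.max k k0)); [lia|exact Hap].
Qed.

Lemma AP_set_level_set (A : natset) (f : nat -> nat) B :
  AP_set (fun x => A x /\ f x < B) -> exists y, AP_set (fun x => A x /\ f x = y).
Proof.
  intros hB. apply (AP_set_pigeonhole (fun y x => A x /\ f x = y) B). intros k.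
  destruct (AP_set_monochromatic _ (fun x => Nat.min (f x) B) (S B) (S k) hB
              ltac:(intros; cbv beta; lia)) as [a [d [Hd H]]].
  assert (Ha : f a < B).
  { destruct (H 0 ltac:(lia)) as [[_ Hf0] _]. rewrite Nat.add_0_r in Hf0. exact Hf0. }
  exists (f a). split; [exact Ha|]. exists a, d. split; [exact Hd|].
  intros i Hi. destruct (H i ltac:(lia)) as [[HAi Hfi] Hc]. split; [exact HAi|lia].
Qed.

Definition congruent_ap (A : natset) (f : nat -> nat) (m B len a d : nat) : Prop :=
  0 < d /\ forall i, i < len ->
    A (a + i * d) /\ B <= f (a + i * d) /\ f (a + i * d) mod m = f a mod m.

(* Colour by [f mod m] above [B] and by a single extra colour below [B]; the
   extra colour cannot carry long progressions. *)
Lemma congruent_ap_exists (A : natset) (f : nat -> nat) m B len :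
  AP_set A -> ~ AP_set (fun x => A x /\ f x < B) -> 0 < m ->
  exists a d, congruent_ap A f m B len a d.
Proof.
  intros hA HB Hm. apply not_all_ex_not in HB. destruct HB as [k0 Hk0].
  set (col := fun x => if f x <? B then 0 else S (f x mod m)).
  assert (Hcol : forall x, col x < S m).
  { intros x. unfold col. destruct (f x <? B); [lia|].
    pose proof (Nat.mod_upper_bound (f x) m ltac:(lia)). lia. }
  destruct (AP_set_monochromatic A col (S m) (Nat.max len k0) hA Hcol) as [a [d [Hd H]]].
  exists a, d. split; [exact Hd|].
  destruct (Nat.ltb_spec (f a) B) as [Hfa|Hfa].
  - exfalso. apply Hk0. exists a, d. split; [exact Hd|]. intros i Hi.
    destruct (H i ltac:(lia)) as [HAi Hci]. unfold col in Hci.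
    destruct (Nat.ltb_spec (f a) B); [|lia].
    destruct (Nat.ltb_spec (f (a + i * d)) B); [split; assumption|discriminate].
  - intros i Hi. destruct (H i ltac:(lia)) as [HAi Hci]. unfold col in Hci.
    destruct (Nat.ltb_spec (f a) B); [lia|].
    destruct (Nat.ltb_spec (f (a + i * d)) B); [discriminate|].
    split; [exact HAi|]. split; [lia|]. congruence.
Qed.

Lemma congruent_stages_exist (A : natset) (f : nat -> nat) :
  AP_set A -> (forall B, ~ AP_set (fun x => A x /\ f x < B)) ->
  exists start step : nat -> nat -> nat,
    forall j B, congruent_ap A f (S j) B j (start j B) (step j B).
Proof.
  intros hA Hunb.
  assert (Hstages : forall jB : nat * nat, exists ad : nat * nat,
            congruent_ap A f (S (fst jB)) (snd jB) (fst jB) (fst ad) (snd ad)).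
  { intros [j B]. destruct (congruent_ap_exists A f (S j) B j hA (Hunb B)) as [a [d H]];
      [lia|]. exists (a, d). exact H. }
  destruct (choice _ Hstages) as [stage Hstage].
  exists (fun j B => fst (stage (j, B))), (fun j B => snd (stage (j, B))).
  intros j B. exact (Hstage (j, B)).
Qed.

Section Gluing.

Variables (A : natset) (f : nat -> nat) (start step : nat -> nat -> nat).

Hypothesis stage_spec : forall j B, congruent_ap A f (S j) B j (start j B) (step j B).

Fixpoint bound (j : nat) : nat :=
  match j with
  | 0 => 0
  | S j => bound j + S j +
      list_max (map (fun i => f (start j (bound j) + i * step j (bound j))) (seq 0 j))
  end.

Definition term (j i : nat) : nat := start j (bound j) + i * step j (bound j).

Definition glued : natset := fun x => exists j i, i < j /\ x = term j i.

Lemma bound_mono i j : i <= j -> bound i <= bound j.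
Proof. induction 1; simpl; lia. Qed.

Lemma bound_ge j : j <= bound j.
Proof. induction j; simpl; lia. Qed.

Lemma term_spec j i : i < j ->
  A (term j i) /\ bound j <= f (term j i) /\ f (term j i) + S j <= bound (S j) /\
  f (term j i) mod S j = f (start j (bound j)) mod S j.
Proof.
  intros Hi. destruct (stage_spec j (bound j)) as [_ H].
  destruct (H i Hi) as [HA [Hlow Hmod]].
  split; [exact HA|]. split; [exact Hlow|]. split; [|exact Hmod].
  set (l := map (fun i => f (start j (bound j) + i * step j (bound j))) (seq 0 j)).
  assert (Hmax : Forall (fun y => y <= list_max l) l) by (apply list_max_le; lia).
  rewrite Forall_forall in Hmax.
  specialize (Hmax (f (term j i)) ltac:(apply in_map_iff; exists i; split;
                                          [reflexivity|apply in_seq; lia])).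
  change (bound (S j)) with (bound j + S j + list_max l). lia.
Qed.

Lemma glued_subset : subset glued A.
Proof. intros x [j [i [Hi ->]]]. apply term_spec, Hi. Qed.

Lemma glued_AP_set : AP_set glued.
Proof.
  intros k. exists (start k (bound k)), (step k (bound k)).
  split; [apply stage_spec|]. intros i Hi. exists k, i. auto.
Qed.

Lemma glued_finite_to_one : finite_to_one_on f glued.
Proof.
  intros y. exists (flat_map (fun j => map (term j) (seq 0 j)) (seq 0 (S y))).
  intros x [[j [i [Hi ->]]] Hy].
  destruct (term_spec j i Hi) as [_ [Hlow _]]. pose proof (bound_ge j).
  apply in_flat_map. exists j. split; [apply in_seq; lia|].
  apply in_map_iff. exists i. split; [reflexivity|apply in_seq; lia].
Qed.

Lemma image_glued_infinite : infinite_set (image f glued).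
Proof.
  intros N. exists (f (term (S N) 0)). split.
  - destruct (term_spec (S N) 0 ltac:(lia)) as [_ [Hlow _]].
    pose proof (bound_ge (S N)). lia.
  - exists (term (S N) 0). split; [exists (S N), 0; split; [lia|reflexivity]|reflexivity].
Qed.

(* Values from different stages are separated by the margin in [bound]; values
   from one stage [j] are congruent modulo [j + 1]. *)
Lemma image_glued_sparse : sparse (image f glued).
Proof.
  intros J. exists (bound J).
  intros u v [x [[j [i [Hi ->]]] <-]] [x' [[j' [i' [Hi' ->]]] <-]] HJ Huv.
  destruct (term_spec j i Hi) as [_ [Hlow [Hup Hmod]]].
  destruct (term_spec j' i' Hi') as [_ [Hlow' [Hup' Hmod']]].
  assert (HjJ : J <= j).
  { destruct (Nat.le_gt_cases J j) as [|Hlt]; [assumption|].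
    pose proof (bound_mono (S j) J Hlt). lia. }
  destruct (lt_eq_lt_dec j j') as [[Hlt|<-]|Hgt].
  - pose proof (bound_mono (S j) j' Hlt). lia.
  - rewrite <- Hmod' in Hmod. pose proof (mod_gap (S j) _ _ ltac:(lia) Hmod Huv). lia.
  - pose proof (bound_mono (S j') j Hgt). lia.
Qed.

End Gluing.

Lemma image_level_set (A : natset) (f : nat -> nat) y :
  AP_set (fun x => A x /\ f x = y) ->
  forall z, image f (fun x => A x /\ f x = y) z <-> z = y.
Proof.
  intros Hy z. split; [intros [x [[_ <-] <-]]; reflexivity|intros ->].
  destruct (Hy 1) as [a [d [_ Ha]]]. destruct (Ha 0) as [HA0 Hf0]; [lia|].
  exists (a + 0 * d). auto.
Qed.

Theorem lemma1p1 (A : nat -> Prop) (f : nat -> nat) (hA : AP_set A) :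
  exists C : nat -> Prop,
    subset C A /\ AP_set C /\
    ( (* (1) |f[C]| = 1 *)
      (exists y, forall z, image f C z <-> z = y)
      \/
      (* (2) f finite-to-one on C, and the increasing enumeration of f[C]
             has gaps tending to infinity *)
      (finite_to_one_on f C /\
       exists x : nat -> nat, increasing_enum x (image f C) /\
         forall M : nat, exists N : nat, forall n, N <= n -> M <= x (S n) - x n) )
    /\ ~ IP_set (image f C).
Proof.
  destruct (classic (exists B, AP_set (fun x => A x /\ f x < B))) as [[B HB]|Hunb].
  - destruct (AP_set_level_set A f B HB) as [y Hy].
    pose proof (image_level_set A f y Hy) as Himg.
    exists (fun x => A x /\ f x = y).
    split; [intros x []; assumption|]. split; [exact Hy|]. split.
    + left. exists y. exact Himg.
    + apply sparse_not_IP_set, (bounded_sparse _ y). intros z Hz. apply Himg in Hz. lia.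
  - destruct (congruent_stages_exist A f hA (fun B HB => Hunb (ex_intro _ B HB)))
      as [start [step Hspec]].
    pose proof (image_glued_sparse A f start step Hspec) as Hsparse.
    destruct (increasing_enum_exists _ (image_glued_infinite A f start step Hspec))
      as [x Hx].
    exists (glued f start step).
    split; [exact (glued_subset A f start step Hspec)|].
    split; [exact (glued_AP_set A f start step Hspec)|].
    split; [right; split|exact (sparse_not_IP_set _ Hsparse)].
    + exact (glued_finite_to_one A f start step Hspec).
    + exists x. split; [exact Hx|exact (increasing_enum_gaps _ x Hx Hsparse)].
Qed.
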